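(* Let $\eta>0$, $\widetilde{x}_1\in C$, and let $(\widehat{x}_t^* )_{t\ge 1}$ be an arbitrary sequence in $H$. Run Optimistic Greedy Projection (OGP): for $t=1,2,\dots$, $$\widetilde{x}_{t+1}=P_C(\widetilde{x}_t-\eta x_t^* ),\quad x_t^*\in\partial\varphi_t(x_t),\qquad x_{t+1}=P_C(\widetilde{x}_{t+1}-\eta\widehat{x}_{t+1}^* ),$$ where $x_1\in C$ is the initial played point ($x_1=P_C(\widetilde x_1-\eta\widehat x_1^* )$). Then for every $T\ge1$ and every reference sequence $z_1,\dots,z_T\in C$, $$\sum_{t=1}^T\varphi_t(x_t)-\sum_{t=1}^T\varphi_t(z_t)\le \frac{\rho^2}{2\eta}+\frac{\rho}{\eta}\sum_{t=2}^T\|z_t-z_{t-1}\|+\frac{\eta}{2}\sum_{t=1}^T\|x_t^*-\widehat{x}_t^*\|^2-\frac{1}{2\eta}\sum_{t=1}^T\|x_t-\widetilde{x}_t\|^2 .$$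
   Context: $H$ is a real Hilbert space with inner product $\langle\cdot,\cdot\rangle$; $C\subset H$ is nonempty, closed and convex with diameter $\rho=\sup_{x,y\in C}\|x-y\|<\infty$; $P_C$ denotes the metric projection onto $C$. For each round $t$, $\varphi_t:H\to(-\infty,+\infty]$ is a convex function with $C\subset\operatorname{dom}\partial\varphi_t$ (the loss chosen by an adversary, possibly depending on past play), and $\partial$ denotes the subdifferential. *)

From HB Require Import structures.
From mathcomp Require Import all_boot all_order all_algebra.
From mathcomp Require Import all_classical all_reals.
Set Implicit Arguments. Unset Strict Implicit. Unset Printing Implicit Defensive.
Import Order.TTheory GRing.Theory Num.Theory.
Local Open Scope classical_set_scope.
Local Open Scope ring_scope.

Definition inner_product (R : realType) (H : lmodType R) (ip : H -> H -> R) :=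
  [/\ (forall x y, ip x y = ip y x),
      (forall a x y z, ip (a *: x + y) z = a * ip x z + ip y z),
      (forall x, 0 <= ip x x) &
      (forall x, ip x x = 0 -> x = 0)].

Definition inorm (R : realType) (H : lmodType R) (ip : H -> H -> R) (x : H) : R :=
  Num.sqrt (ip x x).

Definition hilbert (R : realType) (H : lmodType R) (ip : H -> H -> R) :=
  inner_product ip /\
  forall u : nat -> H,
    (forall e : R, 0 < e -> exists N : nat, forall m n : nat, (N <= m)%N -> (N <= n)%N ->
        inorm ip (u m - u n) < e) ->
    exists l : H, forall e : R, 0 < e -> exists N : nat, forall n : nat, (N <= n)%N ->
        inorm ip (u n - l) < e.

Definition convex_set (R : realType) (H : lmodType R) (C : set H) :=
  forall x y (l : R), C x -> C y -> 0 <= l <= 1 -> C (l *: x + (1 - l) *: y).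

Definition norm_closed (R : realType) (H : lmodType R) (ip : H -> H -> R) (C : set H) :=
  forall (u : nat -> H) (l : H), (forall n, C (u n)) ->
    (forall e : R, 0 < e -> exists N : nat, forall n : nat, (N <= n)%N -> inorm ip (u n - l) < e) ->
    C l.

Definition bounded_diam (R : realType) (H : lmodType R) (ip : H -> H -> R) (C : set H) :=
  exists M : R, forall x y, C x -> C y -> inorm ip (x - y) <= M.

Definition diameter (R : realType) (H : lmodType R) (ip : H -> H -> R) (C : set H) : R :=
  sup [set r | exists x y, [/\ C x, C y & r = inorm ip (x - y)]].

Definition is_proj (R : realType) (H : lmodType R) (ip : H -> H -> R) (C : set H) (x p : H) :=
  C p /\ forall y, C y -> inorm ip (x - p) <= inorm ip (x - y).

Definition convex_fun (R : realType) (H : lmodType R) (f : H -> \bar R) :=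
  (forall x : H, f x != -oo%E) /\
  forall (x y : H) (l : R), 0 < l < 1 ->
    (f (l *: x + (1 - l) *: y)%R <= l%:E * f x + (1 - l)%:E * f y)%E.

Definition subgrad (R : realType) (H : lmodType R) (ip : H -> H -> R) (f : H -> \bar R) (x s : H) :=
  f x \is a fin_num /\ forall y : H, (f x + (ip s (y - x)%R)%:E <= f y)%E.

Definition in_dom_subdiff (R : realType) (H : lmodType R) (ip : H -> H -> R) (f : H -> \bar R) (x : H) :=
  exists s, subgrad ip f x s.

From HB Require Import structures.
From mathcomp Require Import all_boot all_order all_algebra.
From mathcomp Require Import all_classical all_reals.
From mathcomp Require Import ring lra.
Import Order.TTheory GRing.Theory Num.Theory.
Local Open Scope classical_set_scope.
Local Open Scope ring_scope.

(* Write |u|^2 = <u, u>.  The proof combines three facts about a real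
   inner-product space:
   - the variational characterisation of the metric projection onto a convex
     set: if p = P_C(x) then <x - p, y - p> <= 0 for every y in C;
   - the one-round inequality: if x_{t+1}~ = P_C(x_t~ - eta g) and
     x_t = P_C(x_t~ - eta h), then for z in C
       eta <g, x_t - z> <= eta^2/2 |g - h|^2
                           + (|x_t~ - z|^2 - |x_{t+1}~ - z|^2)/2 - |x_t - x_t~|^2/2,
     a consequence of the two variational inequalities and |.|^2 >= 0;
   - a telescoping bound for moving comparators: as the z_t move, the sum of
     |x_t~ - z_t|^2 - |x_{t+1}~ - z_t|^2 is at most rho^2 + 2 rho sum |z_t - z_{t-1}|,
     using Cauchy-Schwarz to compare |p - z'|^2 and |p - z|^2.
   The subgradient inequality phi_t(x_t) - phi_t(z_t) <= <x_t*, x_t - z_t> turns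
   the one-round inequality into a per-round regret bound, and summing it over
   t = 1..T with the telescoping bound gives the theorem. *)

Section InnerProductSpace.
Context {R : realType} {H : lmodType R} {ip : H -> H -> R}.
Hypothesis hip : inner_product ip.

Lemma ipC x y : ip x y = ip y x.
Proof. by case: hip. Qed.

Lemma ipDl x y z : ip (x + y) z = ip x z + ip y z.
Proof. by case: hip => _ lin _ _; have := lin 1 x y z; rewrite scale1r mul1r. Qed.

Lemma ip0l z : ip 0 z = 0.
Proof. by have := ipDl 0 0 z; rewrite addr0 => /eqP; rewrite -subr_eq subrr eq_sym => /eqP. Qed.

Lemma ipZl a x z : ip (a *: x) z = a * ip x z.
Proof. by case: hip => _ lin _ _; have := lin a x 0 z; rewrite addr0 ip0l addr0. Qed.

Lemma ipNl x z : ip (- x) z = - ip x z.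
Proof. by rewrite -scaleN1r ipZl mulN1r. Qed.

Lemma ipDr x y z : ip z (x + y) = ip z x + ip z y.
Proof. by rewrite ipC ipDl !(ipC z). Qed.

Lemma ipZr a x z : ip z (a *: x) = a * ip z x.
Proof. by rewrite ipC ipZl ipC. Qed.

Lemma ipNr x z : ip z (- x) = - ip z x.
Proof. by rewrite ipC ipNl ipC. Qed.

(* Expand inner products of linear combinations into inner products of the
   atoms, and orient each pair <a, b>, <b, a> the same way, so that identities
   between them become ring identities. *)
Ltac ip_expand :=
  rewrite ?(ipDl, ipNl, ipZl, ipDr, ipNr, ipZr);
  repeat match goal with |- context [ip ?a ?b] =>
    match goal with |- context [ip b a] =>
      tryif constr_eq a b then fail else rewrite (ipC b a) end end.

Lemma ip_ge0 x : 0 <= ip x x.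
Proof. by case: hip. Qed.

Lemma inorm_ge0 x : 0 <= inorm ip x.
Proof. exact: sqrtr_ge0. Qed.

Lemma inorm_sq x : inorm ip x ^+ 2 = ip x x.
Proof. by rewrite sqr_sqrtr // ip_ge0. Qed.

Lemma inorm_eq0 x : inorm ip x = 0 -> x = 0.
Proof.
case: hip => _ _ _ definite /eqP; rewrite sqrtr_eq0 => le0.
by apply: definite; apply/le_anti; rewrite le0 ip_ge0.
Qed.

(* Cauchy-Schwarz inequality: expand |b u - a v|^2 >= 0 with a = |u|, b = |v|. *)
Lemma cauchy_schwarz u v : ip u v <= inorm ip u * inorm ip v.
Proof.
set a := inorm ip u; set b := inorm ip v.
have [a0|a_neq0] := eqVneq a 0; first by rewrite (inorm_eq0 u a0) ip0l a0 mul0r.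
have [b0|b_neq0] := eqVneq b 0; first by rewrite (inorm_eq0 v b0) ipC ip0l b0 mulr0.
have ab_gt0 : 0 < a * b by rewrite mulr_gt0 // lt_def ?a_neq0 ?b_neq0 ?inorm_ge0.
have := ip_ge0 (b *: u - a *: v); ip_expand; rewrite -!inorm_sq -/a -/b => sq_ge0.
have : a * b * (2 * ip u v) <= a * b * (2 * (a * b)) by nra.
by rewrite ler_pM2l // => h; lra.
Qed.

(* Otherwise moving
   from p towards y by the step l = c/(c + |y - p|^2) would get closer to x. *)
Lemma proj_variational {C x p y} :
  convex_set C -> is_proj ip C x p -> C y -> ip (x - p) (y - p) <= 0.
Proof.
move=> convC [Cp p_min] Cy.
set c := ip (x - p) (y - p); set d := ip (y - p) (y - p).
have d_ge0 : 0 <= d := ip_ge0 _.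
rewrite leNgt; apply/negP => c_gt0.
set l := c / (c + d).
have cd_gt0 : 0 < c + d by lra.
have l_gt0 : 0 < l by rewrite divr_gt0.
have l_le1 : l <= 1 by rewrite ler_pdivrMr // mul1r; lra.
have Cq : C (l *: y + (1 - l) *: p) by apply: convC; rewrite ?(ltW l_gt0).
have := p_min _ Cq => dist_le.
have := ler_pM (inorm_ge0 _) (inorm_ge0 _) dist_le dist_le.
rewrite -!expr2 !inorm_sq.
have -> : ip (x - (l *: y + (1 - l) *: p)) (x - (l *: y + (1 - l) *: p)) =
          ip (x - p) (x - p) - 2 * l * c + l ^+ 2 * d.
  by rewrite /c /d; ip_expand; ring.
move=> sq_le.
have : l * (2 * c) <= l * (l * d) by lra.
rewrite ler_pM2l // => step_le.
have : (c + d) * (2 * c) <= (c + d) * (l * d) by rewrite ler_pM2l.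
have -> : (c + d) * (l * d) = c * d by rewrite /l; field; lra.
nra.
Qed.

(* One round of the optimistic projection scheme: the new centre
   p' = P_C(p - eta g) and the played point x = P_C(p - eta h) satisfy, for
   every comparator z in C,
     eta <g, x - z> <= eta^2/2 |g - h|^2 + (|p - z|^2 - |p' - z|^2)/2 - |x - p|^2/2.
   It follows from the variational inequalities for p' (tested at z) and for x
   (tested at p'), together with |eta (g - h) - (x - p')|^2 >= 0. *)
Lemma projection_round {C} {eta : R} {p p' x z g h} :
  convex_set C -> 0 < eta ->
  is_proj ip C (p - eta *: g) p' -> is_proj ip C (p - eta *: h) x -> C z ->
  eta * ip g (x - z) <=
    eta ^+ 2 / 2 * inorm ip (g - h) ^+ 2
    + (inorm ip (p - z) ^+ 2 - inorm ip (p' - z) ^+ 2) / 2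
    - inorm ip (x - p) ^+ 2 / 2.
Proof.
move=> convC eta_gt0 proj_p' proj_x Cz.
have var_p' := proj_variational convC proj_p' Cz.
have var_x := proj_variational convC proj_x proj_p'.1.
have sq_ge0 := ip_ge0 (eta *: (g - h) - (x - p')).
rewrite !inorm_sq; move: var_p' var_x sq_ge0; ip_expand => *.
nra.
Qed.

(* Moving the comparator from z to z' changes the squared distance to p by at
   most 2 rho |z' - z| when both comparators are within rho of p:
   |p - z'|^2 - |p - z|^2 = <z' - z, (z' - p) + (z - p)>. *)
Lemma sq_dist_shift {rho : R} {p z z'} :
  inorm ip (z' - p) <= rho -> inorm ip (z - p) <= rho ->
  inorm ip (p - z') ^+ 2 - inorm ip (p - z) ^+ 2 <= 2 * rho * inorm ip (z' - z).
Proof.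
move=> z'p_le zp_le.
have -> : inorm ip (p - z') ^+ 2 - inorm ip (p - z) ^+ 2 =
          ip (z' - z) (z' - p) + ip (z' - z) (z - p).
  by rewrite !inorm_sq; ip_expand; ring.
have cs1 := cauchy_schwarz (z' - z) (z' - p).
have cs2 := cauchy_schwarz (z' - z) (z - p).
have dz_ge0 := inorm_ge0 (z' - z).
have : inorm ip (z' - z) * inorm ip (z' - p) <= inorm ip (z' - z) * rho
  by rewrite ler_wpM2l.
have : inorm ip (z' - z) * inorm ip (z - p) <= inorm ip (z' - z) * rho
  by rewrite ler_wpM2l.
lra.
Qed.

(* If the centres p_t and the
   comparators z_t lie in C, and points of C are at most rho apart, then for
   1 <= n <= T the partial sums of |p_t - z_t|^2 - |p_{t+1} - z_t|^2 plus the
   remaining term |p_{n+1} - z_n|^2 are bounded by rho^2 + 2 rho times the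
   path length of z; the extra term is the induction invariant. *)
Lemma moving_telescope {C : set H} {p z : nat -> H} {rho : R} {T : nat} :
  (forall t, (1 <= t)%N -> C (p t)) -> (forall t, (1 <= t <= T)%N -> C (z t)) ->
  (forall a b, C a -> C b -> inorm ip (a - b) <= rho) ->
  forall n, (1 <= n <= T)%N ->
  \sum_(1 <= t < n.+1) (inorm ip (p t - z t) ^+ 2 - inorm ip (p t.+1 - z t) ^+ 2)
    + inorm ip (p n.+1 - z n) ^+ 2
  <= rho ^+ 2 + 2 * rho * \sum_(2 <= t < n.+1) inorm ip (z t - z t.-1).
Proof.
move=> Cp Cz diam_le.
have sq_le a b : C a -> C b -> inorm ip (a - b) ^+ 2 <= rho ^+ 2.
  by move=> Ca Cb; rewrite lerXn2r ?nnegrE ?inorm_ge0 ?diam_le //;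
     apply: le_trans (diam_le _ _ Ca Cb); apply: inorm_ge0.
elim=> [//|n IH] /andP[n_ge1 n_le].
case: n IH n_ge1 n_le => [|n] IH _ n_le.
  rewrite big_nat1 big_geq // mulr0 addr0 subrK.
  exact: sq_le (Cp 1%N isT) (Cz 1%N n_le).
have {}IH := IH (ltnW n_le).
rewrite (big_nat_recr n.+2 1%N) // (big_nat_recr n.+2 2%N) //=.
have shift := sq_dist_shift (diam_le _ _ (Cz n.+2 n_le) (Cp n.+2 isT))
                             (diam_le _ _ (Cz n.+1 (ltnW n_le)) (Cp n.+2 isT)).
have := inorm_ge0 (p n.+3 - z n.+2).
lra.
Qed.

Lemma round_regret {C} {f : H -> \bar R} {eta : R} {p p' x z g h} :
  convex_set C -> 0 < eta -> subgrad ip f x g -> f z \is a fin_num ->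
  is_proj ip C (p - eta *: g) p' -> is_proj ip C (p - eta *: h) x -> C z ->
  fine (f x) - fine (f z) <=
    eta / 2 * inorm ip (g - h) ^+ 2
    + (inorm ip (p - z) ^+ 2 - inorm ip (p' - z) ^+ 2) / (2 * eta)
    - inorm ip (x - p) ^+ 2 / (2 * eta).
Proof.
move=> convC eta_gt0 [fx_fin subgrad_ineq] fz_fin proj_p' proj_x Cz.
have linearised : fine (f x) - fine (f z) <= ip g (x - z).
  have := subgrad_ineq z; rewrite -(fineK fx_fin) -(fineK fz_fin) -EFinD lee_fin.
  have -> : ip g (z - x) = - ip g (x - z) by ip_expand; ring.
  lra.
rewrite -(ler_pM2l eta_gt0); apply: le_trans (ler_wpM2l (ltW eta_gt0) linearised) _.
apply: le_trans (projection_round convC eta_gt0 proj_p' proj_x Cz) _.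
by rewrite le_eqVlt; apply/predU1P; left; field; rewrite gt_eqF.
Qed.

Lemma ogp_regret {C : set H} {phi : nat -> H -> \bar R} {eta rho : R}
    {xt x xs xh z : nat -> H} {T : nat} :
  convex_set C -> 0 < eta -> (forall a b, C a -> C b -> inorm ip (a - b) <= rho) ->
  (forall t, (1 <= t)%N -> C (xt t)) -> (forall t, (1 <= t <= T)%N -> C (z t)) ->
  (forall t, (1 <= t <= T)%N ->
     [/\ subgrad ip (phi t) (x t) (xs t), phi t (z t) \is a fin_num,
         is_proj ip C (xt t - eta *: xs t) (xt t.+1) &
         is_proj ip C (xt t - eta *: xh t) (x t)]) ->
  (1 <= T)%N ->
  \sum_(1 <= t < T.+1) fine (phi t (x t)) - \sum_(1 <= t < T.+1) fine (phi t (z t)) <=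
    rho ^+ 2 / (2 * eta)
    + rho / eta * \sum_(2 <= t < T.+1) inorm ip (z t - z t.-1)
    + eta / 2 * \sum_(1 <= t < T.+1) inorm ip (xs t - xh t) ^+ 2
    - 1 / (2 * eta) * \sum_(1 <= t < T.+1) inorm ip (x t - xt t) ^+ 2.
Proof.
move=> convC eta_gt0 diam_le Cxt Cz step T_ge1.
pose gap t := inorm ip (xt t - z t) ^+ 2 - inorm ip (xt t.+1 - z t) ^+ 2.
have per_round t : (1 <= t < T.+1)%N ->
    fine (phi t (x t)) - fine (phi t (z t)) <=
    eta / 2 * inorm ip (xs t - xh t) ^+ 2 + gap t / (2 * eta)
    - inorm ip (x t - xt t) ^+ 2 / (2 * eta).
  move=> t_in; have [sub phiz_fin proj_xt proj_x] := step t t_in.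
  exact: round_regret convC eta_gt0 sub phiz_fin proj_xt proj_x (Cz t t_in).
have summed := ler_sum_nat per_round.
rewrite sumrB !big_split /= sumrN -mulr_sumr -!mulr_suml in summed.
have gap_bound : (\sum_(1 <= t < T.+1) gap t) / (2 * eta) <=
    rho ^+ 2 / (2 * eta) + rho / eta * \sum_(2 <= t < T.+1) inorm ip (z t - z t.-1).
  set path := \sum_(2 <= t < T.+1) inorm ip (z t - z t.-1).
  have telescope := moving_telescope Cxt Cz diam_le T (introT andP (conj T_ge1 (leqnn T))).
  rewrite -/path in telescope.
  have last_ge0 := sqr_ge0 (inorm ip (xt T.+1 - z T)).
  have -> : rho ^+ 2 / (2 * eta) + rho / eta * path
          = (rho ^+ 2 + 2 * rho * path) / (2 * eta) by field; rewrite gt_eqF.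
  rewrite ler_pM2r ?invr_gt0 ?mulr_gt0 // /gap -/path.
  lra.
rewrite mul1r [_ / _ * _]mulrC in summed *.
lra.
Qed.

End InnerProductSpace.

Lemma sume_fine {R : realType} {m n : nat} {F : nat -> \bar R} :
  (forall t, (m <= t < n)%N -> F t \is a fin_num) ->
  (\sum_(m <= t < n) F t = (\sum_(m <= t < n) fine (F t))%:E)%E.
Proof.
move=> F_fin; rewrite big_nat_cond [in RHS]big_nat_cond EFin_sum_fine //.
by move=> t /andP[t_in _]; apply: F_fin.
Qed.

Lemma dist_le_diameter {R : realType} {H : lmodType R} {ip : H -> H -> R} {C : set H} {x y : H} :
  bounded_diam ip C -> C x -> C y -> inorm ip (x - y) <= diameter ip C.
Proof.
move=> [M M_ub] Cx Cy; apply: ub_le_sup; last by exists x, y.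
by exists M => r [a [b [Ca Cb ->]]]; apply: M_ub.
Qed.

Theorem lemma1 (R : realType) (H : lmodType R) (ip : H -> H -> R)
  (C : set H) (phi : nat -> H -> \bar R)
  (eta : R) (xt x xs xh : nat -> H) :
  hilbert ip ->
  C !=set0 -> norm_closed ip C -> convex_set C -> bounded_diam ip C ->
  (forall t, (1 <= t)%N -> convex_fun (phi t)) ->
  (forall t, (1 <= t)%N -> forall y, C y -> in_dom_subdiff ip (phi t) y) ->
  0 < eta ->
  C (xt 1%N) ->
  is_proj ip C (xt 1%N - eta *: xh 1%N) (x 1%N) ->
  (forall t, (1 <= t)%N ->
     [/\ subgrad ip (phi t) (x t) (xs t),
         is_proj ip C (xt t - eta *: xs t) (xt t.+1) &
         is_proj ip C (xt t.+1 - eta *: xh t.+1) (x t.+1)]) ->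
  forall (T : nat) (z : nat -> H), (1 <= T)%N ->
  (forall t, (1 <= t <= T)%N -> C (z t)) ->
  let rho := diameter ip C in
  (\sum_(1 <= t < T.+1) phi t (x t) - \sum_(1 <= t < T.+1) phi t (z t) <=
   (rho ^+ 2 / (2 * eta)
    + rho / eta * \sum_(2 <= t < T.+1) inorm ip (z t - z t.-1)
    + eta / 2 * \sum_(1 <= t < T.+1) inorm ip (xs t - xh t) ^+ 2
    - 1 / (2 * eta) * \sum_(1 <= t < T.+1) inorm ip (x t - xt t) ^+ 2)%:E)%E.
Proof.
move=> [hip _] _ _ convC bdC _ dom eta_gt0 Cxt1 proj_x1 step T z T_ge1 Cz.
cbv zeta.
have Cxt t : (1 <= t)%N -> C (xt t).
  by case: t => [|[|t]] // _; case: (step t.+1 isT) => _ [].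
have proj_x t : (1 <= t)%N -> is_proj ip C (xt t - eta *: xh t) (x t).
  by case: t => [|[|t]] // _; case: (step t.+1 isT).
have phiz_fin t : (1 <= t < T.+1)%N -> phi t (z t) \is a fin_num.
  by move=> t_in; have [g []] := dom t (proj1 (andP t_in)) (z t) (Cz t t_in).
have phix_fin t : (1 <= t < T.+1)%N -> phi t (x t) \is a fin_num.
  by move=> /andP[t_ge1 _]; case: (step t t_ge1) => [[]].
have round t : (1 <= t <= T)%N ->
    [/\ subgrad ip (phi t) (x t) (xs t), phi t (z t) \is a fin_num,
        is_proj ip C (xt t - eta *: xs t) (xt t.+1) &
        is_proj ip C (xt t - eta *: xh t) (x t)].
  move=> t_in; have t_ge1 := proj1 (andP t_in).
  have [sub proj_xt _] := step t t_ge1.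
  exact: And4 sub (phiz_fin t t_in) proj_xt (proj_x t t_ge1).
rewrite (sume_fine phix_fin) (sume_fine phiz_fin) -EFinB lee_fin.
have regret := ogp_regret hip convC eta_gt0 (fun a b => dist_le_diameter bdC) Cxt Cz
                          round T_ge1.
exact regret.
Qed.
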